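(* Let $G\subset SO(3)$ be either the tetrahedral group $\mathbb{T}$ or the octahedral group $\mathbb{O}$ (in the coordinates fixed in the context), and let $R_{ij},R_{ji},R_i,R_j\in SO(3)$ satisfy the set equality $$\{R_{ij}^T g R_{ji} : g\in G\}=\{R_i^T g R_j : g\in G\}.$$ Then there exist $h_{ij},h_{ji}\in N_{SO(3)}(G)$ such that $R_{ij}=h_{ij}R_i$ and $R_{ji}=h_{ji}R_j$.
   Context: In the fixed coordinate system, $\mathbb{O}$ is the group of all $3\times 3$ signed permutation matrices (matrices with exactly one nonzero entry in each row and column, that entry being $\pm1$) having determinant $1$; it has 24 elements. $\mathbb{T}\subset\mathbb{O}$ is the 12-element subgroup consisting of the matrices $DP$ where $P$ is the permutation matrix of an even permutation of $\{1,2,3\}$ (identity or a 3-cycle) and $D$ is a diagonal matrix with diagonal entries $\pm1$ and $\det D=1$. For a subgroup $\tilde G$ of a group $\tilde H$, the normalizer is $N_{\tilde H}(\tilde G)=\{\tilde h\in\tilde H:\tilde h^T\tilde G\tilde h=\tilde G\}$ (for rotations, $\tilde h^T=\tilde h^{-1}$). *)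

From HB Require Import structures.
From mathcomp Require Import all_boot all_order all_algebra all_fingroup.
From mathcomp Require Import reals.
Set Implicit Arguments. Unset Strict Implicit. Unset Printing Implicit Defensive.
Import Order.TTheory GRing.Theory Num.Theory.
Local Open Scope ring_scope.

Section Defs.
Variable R : realType.

Definition is_SO3 (A : 'M[R]_3) : Prop := A^T *m A = 1%:M /\ \det A = 1.

Definition signed_perm_mx (A : 'M[R]_3) : Prop :=
  (forall i j, A i j = 0 \/ A i j = 1 \/ A i j = -1) /\
  (forall i, exists! j, A i j != 0) /\
  (forall j, exists! i, A i j != 0).

Definition octaG (A : 'M[R]_3) : Prop := signed_perm_mx A /\ \det A = 1.

Definition tetraG (A : 'M[R]_3) : Prop :=
  exists (d : 'rV[R]_3) (s : 'S_3),
    (forall i, d 0 i = 1 \/ d 0 i = -1) /\ \det (diag_mx d) = 1 /\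
    ~~ odd_perm s /\ A = diag_mx d *m perm_mx s.

Definition normalizer_SO3 (G : 'M[R]_3 -> Prop) (h : 'M[R]_3) : Prop :=
  is_SO3 h /\
  forall X, (exists g, G g /\ X = h^T *m g *m h) <-> G X.

End Defs.

From HB Require Import structures.
From mathcomp Require Import all_boot all_order all_algebra all_fingroup.
From mathcomp Require Import reals.
Import Order.TTheory GRing.Theory Num.Theory.
Local Open Scope ring_scope.

Set Implicit Arguments. Unset Strict Implicit. Unset Printing Implicit Defensive.

(** Put [A := Rij Ri^T] and [B := Rji Rj^T]. Conjugating the hypothesis by
    [Ri] and [Rj] turns it into the set equality [A^T G B = G]. As [1] lies in
    [G], [B = g0 A] for some [g0] in [G]; then [A^T G A = A^T (G g0^-1) B = G],
    so [A] normalizes [G], and so does [B = g0 A]. *)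

Section SignedPermutationMatrices.
Variables (R : comPzRingType) (n : nat).
Implicit Types (d e : 'rV[R]_n) (s t : 'S_n).

Definition sign_vector d := forall i, d 0 i = 1 \/ d 0 i = -1.

Lemma sign_vector_const1 : sign_vector (const_mx 1).
Proof. by move=> i; rewrite mxE; left. Qed.

Lemma sign_vector_perm d s : sign_vector d -> sign_vector (\row_i d 0 (s i)).
Proof. by move=> sd i; rewrite mxE. Qed.

Lemma sign_vector_mul d e s :
  sign_vector d -> sign_vector e -> sign_vector (\row_i (d 0 i * e 0 (s i))).
Proof.
move=> sd se i; rewrite mxE.
by case: (sd i) => ->; case: (se (s i)) => ->; rewrite ?mul1r ?mulN1r ?opprK; auto.
Qed.

Lemma det_diag_perm d s : \det (diag_mx (\row_i d 0 (s i))) = \det (diag_mx d).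
Proof.
rewrite !det_diag [RHS](reindex_inj (@perm_inj _ s)) /=.
by apply: eq_bigr => i _; rewrite mxE.
Qed.

Lemma det_diag_mul_perm d e s :
  \det (diag_mx (\row_i (d 0 i * e 0 (s i)))) = \det (diag_mx d) * \det (diag_mx e).
Proof.
rewrite -(det_diag_perm e s) -det_mulmx mulmx_diag.
by congr (\det (diag_mx _)); apply/rowP => i; rewrite !mxE.
Qed.

Lemma diag_perm_mxE d s i j :
  (diag_mx d *m perm_mx s) i j = if s i == j then d 0 i else 0.
Proof. by rewrite mul_diag_mx !mxE; case: eqP; rewrite ?mulr1 ?mulr0. Qed.

Lemma perm_mx_diag s d :
  perm_mx s *m diag_mx d = diag_mx (\row_i d 0 (s i)) *m perm_mx s.
Proof.
apply/matrixP => i j; rewrite diag_perm_mxE mul_mx_diag !mxE.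
by case: eqP => [<-|_]; rewrite ?mul1r ?mul0r ?mxE.
Qed.

Lemma diag_perm_mxM d s e t :
  diag_mx d *m perm_mx s *m (diag_mx e *m perm_mx t) =
  diag_mx (\row_i (d 0 i * e 0 (s i))) *m perm_mx (s * t).
Proof.
rewrite mulmxA -(mulmxA _ (perm_mx s)) perm_mx_diag mulmxA mulmx_diag -mulmxA.
by rewrite -perm_mxM; congr (diag_mx _ *m _); apply/rowP => i; rewrite !mxE.
Qed.

Lemma tr_diag_perm_mx d s :
  (diag_mx d *m perm_mx s)^T =
  diag_mx (\row_i d 0 ((s^-1)%g i)) *m perm_mx (s^-1)%g.
Proof. by rewrite trmx_mul tr_diag_mx tr_perm_mx perm_mx_diag. Qed.

Lemma diag_perm_mx_orthogonal d s : sign_vector d ->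
  (diag_mx d *m perm_mx s)^T *m (diag_mx d *m perm_mx s) = 1%:M.
Proof.
move=> sd; have dd1 : diag_mx d *m diag_mx d = 1%:M.
  rewrite mulmx_diag -diag_const_mx; congr diag_mx; apply/rowP => i.
  by rewrite !mxE; case: (sd i) => ->; rewrite ?mulr1 ?mulrNN ?mulr1.
rewrite trmx_mul tr_diag_mx tr_perm_mx mulmxA -(mulmxA (perm_mx _)) dd1.
by rewrite mulmx1 -perm_mxM mulVg perm_mx1.
Qed.

End SignedPermutationMatrices.

Section OrthogonalGroups.
Variable R : realType.
Implicit Types (A P Q X Y : 'M[R]_3) (G : 'M[R]_3 -> Prop).

Lemma is_SO3_mulmx_tr P : is_SO3 P -> P *m P^T = 1%:M.
Proof. by case=> PtP _; apply: mulmx1C. Qed.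

Lemma is_SO3_mulmx P Q : is_SO3 P -> is_SO3 Q -> is_SO3 (P *m Q).
Proof.
move=> [PtP dP] [QtQ dQ]; split; last by rewrite det_mulmx dP dQ mulr1.
by rewrite trmx_mul mulmxA -(mulmxA Q^T) PtP mulmx1.
Qed.

Lemma is_SO3_tr P : is_SO3 P -> is_SO3 P^T.
Proof. by move=> SP; split; [rewrite trmxK is_SO3_mulmx_tr | rewrite det_tr; case: SP]. Qed.

Lemma is_SO3_conjE P Q X Y : is_SO3 P -> is_SO3 Q ->
  (P^T *m X *m Q = Y) <-> (X = P *m Y *m Q^T).
Proof.
move=> SP SQ; split=> [<- | ->].
  by rewrite !mulmxA is_SO3_mulmx_tr // mul1mx -mulmxA is_SO3_mulmx_tr // mulmx1.
by rewrite !mulmxA SP.1 mul1mx -mulmxA SQ.1 mulmx1.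
Qed.

Lemma signed_perm_mxP A :
  signed_perm_mx A <-> exists d s, sign_vector d /\ A = diag_mx d *m perm_mx s.
Proof.
have sign_neq0 (x : R) : x = 1 \/ x = -1 -> x != 0.
  by case=> ->; rewrite ?oppr_eq0 oner_eq0.
split=> [[entries [rows cols]] | [d [s [sd ->]]]]; last first.
  split; [|split].
  - by move=> i j; rewrite diag_perm_mxE; case: eqP => _; auto.
  - move=> i; exists (s i); split; first by rewrite diag_perm_mxE eqxx sign_neq0.
    by move=> j; rewrite diag_perm_mxE; case: (s i =P j) => [-> // | _]; rewrite eqxx.
  - move=> j; exists ((s^-1)%g j); split.
      by rewrite diag_perm_mxE permKV eqxx sign_neq0.
    by move=> i; rewrite diag_perm_mxE; case: (s i =P j) => [<- _ | _]; rewrite ?permK ?eqxx.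
pose f i := odflt ord0 [pick j | A i j != 0].
have Af i : A i (f i) != 0.
  rewrite /f; case: pickP => [//|A0].
  by have [j [Aj _]] := rows i; rewrite A0 in Aj.
have f_unique i j : A i j != 0 -> f i = j.
  by move=> Aij; have [j0 [_ U]] := rows i; rewrite -(U j Aij) (U (f i) (Af i)).
have f_inj : injective f.
  move=> i1 i2 E; have [i0 [_ U]] := cols (f i1).
  by rewrite -(U i1 (Af i1)); apply: U; rewrite E.
exists (\row_i A i (f i)), (perm f_inj); split.
  move=> i; rewrite mxE; have := Af i.
  by case: (entries i (f i)) => [->|[->|->]]; rewrite ?eqxx; auto.
apply/matrixP => i j; rewrite diag_perm_mxE permE mxE.
case: eqP => [<- // | ne]; case: (entries i j) => // Aij.
by case: ne; apply: f_unique; rewrite sign_neq0.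
Qed.

Definition SO3_subgroup G :=
  [/\ G 1%:M, forall a b, G a -> G b -> G (a *m b),
      forall a, G a -> G a^T & forall a, G a -> is_SO3 a].

Lemma tetraG_SO3_subgroup : SO3_subgroup (@tetraG R).
Proof.
split.
- exists (const_mx 1), 1%g; split; first exact: sign_vector_const1.
  by rewrite diag_const_mx det1 odd_perm1 perm_mx1 mulmx1.
- move=> _ _ [d [s [sd [dd [es ->]]]]] [e [t [se [de [et ->]]]]].
  rewrite diag_perm_mxM; do 2 eexists; split; last split; last split; last reflexivity.
  + exact: sign_vector_mul.
  + by rewrite det_diag_mul_perm dd de mulr1.
  + by rewrite odd_permM (negbTE es) (negbTE et).
- move=> _ [d [s [sd [dd [es ->]]]]]; rewrite tr_diag_perm_mx.
  do 2 eexists; split; last split; last split; last reflexivity.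
  + exact: sign_vector_perm.
  + by rewrite det_diag_perm.
  + by rewrite odd_permV.
- move=> _ [d [s [sd [dd [es ->]]]]]; split; first exact: diag_perm_mx_orthogonal.
  by rewrite det_mulmx det_perm dd (negbTE es) mulr1.
Qed.

Lemma octaG_SO3_subgroup : SO3_subgroup (@octaG R).
Proof.
split.
- split; last by rewrite det1.
  apply/signed_perm_mxP; exists (const_mx 1), 1%g; split; first exact: sign_vector_const1.
  by rewrite diag_const_mx perm_mx1 mulmx1.
- move=> a b [/signed_perm_mxP[d [s [sd ->]]] da] [/signed_perm_mxP[e [t [se ->]]] db].
  split; last by rewrite det_mulmx da db mulr1.
  apply/signed_perm_mxP; rewrite diag_perm_mxM; do 2 eexists; split; last reflexivity.
  exact: sign_vector_mul.
- move=> a [/signed_perm_mxP[d [s [sd ->]]] da]; split; last by rewrite det_tr.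
  apply/signed_perm_mxP; rewrite tr_diag_perm_mx; do 2 eexists; split; last reflexivity.
  exact: sign_vector_perm.
- move=> a [/signed_perm_mxP[d [s [sd ->]]] da]; split => //.
  exact: diag_perm_mx_orthogonal.
Qed.

End OrthogonalGroups.

Section Normalizer.
Variables (R : realType) (G : 'M[R]_3 -> Prop).
Hypothesis subG : SO3_subgroup G.
Implicit Types (X g h : 'M[R]_3).

Let G1 : G 1%:M. Proof. by case: subG. Qed.
Let GM g h : G g -> G h -> G (g *m h). Proof. by case: subG => _ ? _ _; auto. Qed.
Let GT g : G g -> G g^T. Proof. by case: subG => _ _ ? _; auto. Qed.
Let G_SO3 g : G g -> is_SO3 g. Proof. by case: subG => _ _ _ ?; auto. Qed.

Lemma normalizer_SO3_mull g h :
  G g -> normalizer_SO3 G h -> normalizer_SO3 G (g *m h).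
Proof.
move=> Gg [Sh Nh]; have Sg := G_SO3 Gg; split; first exact: is_SO3_mulmx.
have conjM k : (g *m h)^T *m k *m (g *m h) = h^T *m (g^T *m k *m g) *m h.
  by rewrite trmx_mul !mulmxA.
move=> X; split=> [[k [Gk ->]] | GX].
  by rewrite conjM; apply/Nh; exists (g^T *m k *m g); split; auto.
have [k [Gk ->]] := proj2 (Nh X) GX.
exists (g *m k *m g^T); split; first by auto.
by rewrite conjM (proj2 (is_SO3_conjE _ _ Sg Sg) erefl).
Qed.

Section TwoSidedCoset.
Variables A B : 'M[R]_3.
Hypothesis SA : is_SO3 A.
Hypothesis AGB : forall X, (exists g, G g /\ X = A^T *m g *m B) <-> G X.

Lemma two_sided_coset_translate : exists2 g, G g & B = g *m A.
Proof.
have [g [Gg Eg]] := proj2 (AGB 1%:M) G1.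
exists g^T; first exact: GT.
have gB : g *m B = A.
  by rewrite -[A]mulmx1 Eg !mulmxA is_SO3_mulmx_tr // mul1mx.
by rewrite -gB mulmxA (G_SO3 Gg).1 mul1mx.
Qed.

Lemma two_sided_coset_normalizer : normalizer_SO3 G A /\ normalizer_SO3 G B.
Proof.
have [g0 Gg0 eB] := two_sided_coset_translate.
have [g0tg0 _] := G_SO3 Gg0.
suff NA : normalizer_SO3 G A by split; last by rewrite eB; exact: normalizer_SO3_mull.
split=> // X; split=> [[g [Gg ->]] | GX].
  apply/AGB; exists (g *m g0^T); split; first by auto.
  by rewrite eB !mulmxA -(mulmxA _ g0^T) g0tg0 mulmx1.
have [g [Gg ->]] := proj2 (AGB X) GX.
by exists (g *m g0); split; [auto | rewrite eB !mulmxA].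
Qed.

End TwoSidedCoset.

Lemma two_sided_coset_shift Rij Rji Ri Rj :
  is_SO3 Ri -> is_SO3 Rj ->
  (forall X, (exists g, G g /\ X = Rij^T *m g *m Rji) <->
             (exists g, G g /\ X = Ri^T *m g *m Rj)) ->
  forall X, (exists g, G g /\ X = (Rij *m Ri^T)^T *m g *m (Rji *m Rj^T)) <-> G X.
Proof.
move=> Si Sj Hset X.
have shiftE g : (Rij *m Ri^T)^T *m g *m (Rji *m Rj^T) = Ri *m (Rij^T *m g *m Rji) *m Rj^T.
  by rewrite trmx_mul trmxK !mulmxA.
split=> [[g [Gg ->]] | GX].
  have [g' [Gg' /esym/(is_SO3_conjE _ _ Si Sj)]] :=
    proj1 (Hset _) (ex_intro _ g (conj Gg erefl)).
  by rewrite shiftE => <-.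
have [g [Gg /(is_SO3_conjE _ _ Si Sj)]] :=
  proj2 (Hset (Ri^T *m X *m Rj)) (ex_intro _ X (conj GX erefl)).
by rewrite -shiftE => EX; exists g.
Qed.

End Normalizer.

Theorem proposition1 (R : realType) (G : 'M[R]_3 -> Prop)
  (HG : G = tetraG (R:=R) \/ G = octaG (R:=R))
  (Rij Rji Ri Rj : 'M[R]_3)
  (Hij : is_SO3 Rij) (Hji : is_SO3 Rji) (Hi : is_SO3 Ri) (Hj : is_SO3 Rj)
  (Hset : forall X : 'M[R]_3,
      (exists g, G g /\ X = Rij^T *m g *m Rji) <->
      (exists g, G g /\ X = Ri^T *m g *m Rj)) :
  exists hij hji : 'M[R]_3,
    normalizer_SO3 G hij /\ normalizer_SO3 G hji /\
    Rij = hij *m Ri /\ Rji = hji *m Rj.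
Proof.
have subG : SO3_subgroup G.
  by case: HG => ->; [exact: tetraG_SO3_subgroup | exact: octaG_SO3_subgroup].
have SA := is_SO3_mulmx Hij (is_SO3_tr Hi).
have [NA NB] := two_sided_coset_normalizer subG SA (two_sided_coset_shift Hi Hj Hset).
exists (Rij *m Ri^T), (Rji *m Rj^T); do 2 split => //.
by rewrite -!mulmxA Hi.1 Hj.1 !mulmx1.
Qed.
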